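(* Let $n\geq 1$. The classes $\alpha_{\mathcal D}=\frac{1}{|\mathrm{Stab}_{S_n}(\Delta_{\mathcal D})|}\sum_{\sigma\in S_n}\sigma(\mu_{\Delta_{\mathcal D}})\in H^{|E\mathcal D|}(\mathbb{Z}\mathcal{A}_n;\mathbb{Q})$, for $\mathcal D$ ranging over $\mathcal{D}_n$, form a basis over $\mathbb{Q}$ of $H^\bullet(\mathbb{Z}\mathcal{A}_n;\mathbb{Q})^{S_n}$.
   Context: $P_n$ is the pure braid group on $n$ strands and $\mathbb{Z}\mathcal{A}_n=P_n/[P_n,P_n]\cong\mathbb{Z}^{n(n-1)/2}$. $H^\bullet(\mathbb{Z}\mathcal{A}_n;\mathbb{Q})$ is the exterior algebra on classes $\omega_{ij}$, $1\le i<j\le n$, and the symmetric group $S_n$ acts on it by the algebra automorphisms with $\sigma(\omega_{ij})=\omega_{\sigma(i)\sigma(j)}$ if $\sigma(i)<\sigma(j)$ and $\omega_{\sigma(j)\sigma(i)}$ otherwise. Graphs are finite simple graphs; $K_n$ is the complete graph on $\{1,\dots,n\}$, and $S_n$ acts on subgraphs of $K_n$. For a subgraph $\Delta\subset K_n$ (vertex set $\{1,\dots,n\}$) with edges $(i_1,j_1),\dots,(i_k,j_k)$, $i_t<j_t$, listed lexicographically, $\mu_\Delta=\omega_{i_1j_1}\cdots\omega_{i_kj_k}$. A graph is invariant if every automorphism induces an even permutation of its edge set. $\mathcal{D}_n$ is the set of isomorphism classes of invariant graphs with exactly $n$ vertices (isolated vertices allowed); for each $\mathcal D\in\mathcal D_n$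 a representative $\Delta_{\mathcal D}\subset K_n$ is fixed, and $|E\mathcal D|$ is its number of edges. *)

From HB Require Import structures.
From mathcomp Require Import all_boot all_order all_algebra.
From mathcomp Require Import fingroup perm action.
Set Implicit Arguments. Unset Strict Implicit. Unset Printing Implicit Defensive.
Import GRing.Theory.
Local Open Scope ring_scope.

(* Vertices of K_n are 'I_n (i.e. 0..n-1 instead of 1..n).
   An edge of K_n is a 2-element subset of the vertex set. *)
Definition edge (n : nat) := {e : {set 'I_n} | #|e| == 2%N}.

Lemma edge_act_proof n (s : 'S_n) (e : edge n) : #|s @: val e| == 2%N.
Proof. by rewrite (card_imset _ (@perm_inj _ s)) (valP e). Qed.

Definition edge_act n (s : 'S_n) (e : edge n) : edge n :=
  exist _ (s @: val e) (edge_act_proof s e).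

Lemma edge_act_inj n (s : 'S_n) : injective (edge_act s).
Proof.
move=> e f /(congr1 val) /= H; apply: val_inj.
by apply: (imset_inj (@perm_inj _ s)).
Qed.

Definition edge_perm n (s : 'S_n) : {perm edge n} := perm (@edge_act_inj n s).

(* lexicographic order on edges (i,j), i<j: code (i,j) = i*n + j *)
Definition edge_code n (e : edge n) : nat :=
  ((\big[minn/n]_(i in val e) (i : nat)) * n + \max_(i in val e) (i : nat))%N.
Definition edge_le n (e f : edge n) : bool := (edge_code e <= edge_code f)%N.
Definition edge_lt n (e f : edge n) : bool := (edge_code e < edge_code f)%N.

Definition sorted_edges n (A : {set edge n}) : seq (edge n) := sort (@edge_le n) (enum A).

(* The exterior algebra on generators omega_e (e an edge of K_n), modelling
   H^*(Z A_n; Q): an element is its coordinate vector in the monomial basis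
   indexed by subsets of edges (each basis monomial = increasing product). *)
Definition ext n := {ffun {set edge n} -> rat}.

Definition ext_basis n (A : {set edge n}) : ext n := [ffun C => (C == A)%:R].
Definition ext_scale n (c : rat) (x : ext n) : ext n := [ffun C => c * x C].

Definition shuffle_sign n (A B : {set edge n}) : rat :=
  (-1) ^+ #|[set p in setX A B | edge_lt p.2 p.1]|.

Definition wedge n (x y : ext n) : ext n :=
  [ffun C => \sum_(A : {set edge n}) \sum_(B : {set edge n})
     (if (A :&: B == set0) && (A :|: B == C)
      then shuffle_sign A B * x A * y B else 0)].

Definition ext_one n : ext n := ext_basis set0.
Definition omega n (e : edge n) : ext n := ext_basis [set e].

Definition mu n (D : {set edge n}) : ext n :=
  foldr (@wedge n) (ext_one n) (map (@omega n) (sorted_edges D)).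

(* the S_n action: the algebra automorphism with s(omega_e) = omega_{s e} *)
Definition ext_act n (s : 'S_n) (x : ext n) : ext n :=
  \sum_(A : {set edge n})
     ext_scale (x A) (foldr (@wedge n) (ext_one n)
                        (map (fun e => omega (edge_perm s e)) (sorted_edges A))).

Definition ext_invariant n (x : ext n) : Prop := forall s : 'S_n, ext_act s x = x.

(* graph-theoretic notions: subgraph Delta of K_n = its set of edges *)
Definition stab n (D : {set edge n}) : {set 'S_n} :=
  [set s : 'S_n | edge_perm s @: D == D].

Definition invariant_graph n (D : {set edge n}) : Prop :=
  forall s : 'S_n, s \in stab D -> ~~ odd_perm (restr_perm D (edge_perm s)).

Definition graph_iso n (D1 D2 : {set edge n}) : Prop :=
  exists s : 'S_n, edge_perm s @: D1 = D2.

Definition alpha n (D : {set edge n}) : ext n :=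
  ext_scale (#|stab D|%:R)^-1 (\sum_(s : 'S_n) ext_act s (mu D)).

(* A permutation s maps the monomial mu_A of an edge set A to +-mu_(sA), the
   sign being the parity of the inversions s creates among the sorted edges of
   A. This sign is a cocycle in s, and for s stabilising A it is the sign of the
   permutation s induces on A. So an invariant class is determined by its
   coefficients on one graph per S_n-orbit, vanishes on graphs having an odd
   automorphism, and alpha_D is the invariant class with coefficient 1 at
   Delta_D and 0 at every other representative; these classes are thus
   independent and span the invariants. *)

From HB Require Import structures.
From mathcomp Require Import all_boot all_order all_algebra.
From mathcomp Require Import fingroup perm action.
From mathcomp Require Import zify.
Set Implicit Arguments. Unset Strict Implicit. Unset Printing Implicit Defensive.
Import Order.TTheory GRing.Theory Num.Theory.

Lemma odd_sum (I : Type) (r : seq I) (P : pred I) (F : I -> nat) :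
  odd (\sum_(i <- r | P i) F i) = \big[addb/false]_(i <- r | P i) odd (F i).
Proof. exact: (big_morph odd oddD). Qed.

Lemma odd_count (I : Type) (r : seq I) (P : pred I) :
  odd (count P r) = \big[addb/false]_(i <- r) P i.
Proof. by elim: r => [|i r IHr]; rewrite ?big_nil ?big_cons //= oddD oddb IHr. Qed.

Lemma big_addb_eq_and (I : eqType) (r : seq I) (y : I) (c : I -> bool) :
  y \in r -> uniq r -> \big[addb/false]_(b <- r) ((b == y) && c b) = c y.
Proof. by move=> yr ur; rewrite (bigD1_seq y) //= eqxx big1 ?addbF // => b /negPf ->. Qed.

Lemma imset_permM (T : finType) (p q : {perm T}) (A : {set T}) :
  (p * q)%g @: A = q @: (p @: A).
Proof. by rewrite -imset_comp; apply: eq_imset => x; rewrite permM. Qed.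

Section PermOnInduction.
Variables (T : finType) (S : {set T}) (P : {perm T} -> Prop).
Hypothesis P1 : P 1%g.
Hypothesis P_mul_tperm : forall (q : {perm T}) x y, perm_on S q ->
  x \in S -> y \in S -> x != y -> P q -> P (q * tperm x y)%g.

Lemma perm_on_tperm_ind (q : {perm T}) : perm_on S q -> P q.
Proof.
have [m] := ubnP #|[pred z | q z != z]|; elim: m q => // m IHm q /ltnSE-le_q_m qS.
case: (pickP (fun z => q z != z)) => [x qx | qid]; last first.
  by have -> : q = 1%g by apply/permP => z; apply/eqP; rewrite perm1; apply/negbFE/qid.
have xS : x \in S by apply: (subsetP qS); rewrite inE.
have qxS : q x \in S by rewrite (perm_closed _ qS).
set q' := (q * tperm x (q x))%g.
have q'S : perm_on S q'.
  apply: perm_onM => //; apply: subset_trans (tperm_on _ _) _.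
  by apply/subsetP => z; rewrite !inE => /orP[] /eqP ->.
have -> : q = (q' * tperm x (q x))%g by rewrite -mulgA tperm2 mulg1.
apply: P_mul_tperm => //; first by rewrite eq_sym.
apply: IHm q'S; rewrite (cardD1 x) inE qx in le_q_m; apply: leq_ltn_trans le_q_m.
apply: subset_leq_card; apply/subsetP => z; rewrite !inE /q' permM.
have [-> | zx] := eqVneq z x; first by rewrite tpermR eqxx.
apply: contraNneq => /= qzz.
have qxNz : q x != z by rewrite -{1}qzz (inj_eq perm_inj) eq_sym.
by rewrite qzz tpermD // eq_sym.
Qed.

End PermOnInduction.

Section ListInversions.
Variables (T : finType) (code : T -> nat).
Hypothesis code_inj : injective code.
Local Notation "a <c b" := (code a < code b)%N (at level 70).

Fixpoint inversions (l : seq T) : nat :=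
  if l is x :: l' then (count (fun b => b <c x) l' + inversions l')%N else 0%N.

Definition flips (f : T -> T) (l : seq T) : nat :=
  \sum_(a <- l) \sum_(b <- l) ((a <c b) && (f b <c f a)).

Lemma inversions_sorted (l : seq T) :
  sorted (fun a b => code a <= code b)%N l -> inversions l = 0%N.
Proof.
elim: l => [|x l IHl] //= xl; rewrite IHl ?(path_sorted xl) // addn0.
apply/eqP; rewrite -leqn0 leqNgt -has_count; apply/hasPn => b bl.
rewrite -leqNgt; move: b bl; apply/allP.
by apply: order_path_min xl => a b c; apply: leq_trans.
Qed.

Lemma flips_perm_eq (f : T -> T) (l1 l2 : seq T) :
  perm_eq l1 l2 -> flips f l1 = flips f l2.
Proof.
move=> eq_l; rewrite /flips (perm_big _ eq_l).
by apply: eq_bigr => a _; apply: perm_big.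
Qed.

Lemma odd_inversions_map (f : T -> T) (l : seq T) : injective f -> uniq l ->
  odd (inversions (map f l)) = odd (inversions l) (+) odd (flips f l).
Proof.
move=> f_inj; elim: l => [|x l IHl] /=; first by rewrite /flips big_nil.
case/andP => xNl ul.
have flips_cons : flips f (x :: l) = (\sum_(b <- l) ((x <c b) && (f b <c f x))
    + \sum_(a <- l) ((a <c x) && (f x <c f a)) + flips f l)%N.
  rewrite /flips big_cons big_cons ltnn add0n -addnA; congr addn.
  by rewrite -big_split; apply: eq_bigr => a _; rewrite big_cons.
have key : odd (count (preim f (fun b => b <c f x)) l) = odd (count (fun b => b <c x) l)
    (+) (odd (\sum_(b <- l) ((x <c b) && (f b <c f x)))
         (+) odd (\sum_(a <- l) ((a <c x) && (f x <c f a)))).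
  rewrite !odd_count !odd_sum -!big_split /=; apply: eq_big_seq => b bl.
  have bx : code b != code x by apply: contra xNl => /eqP/code_inj <-.
  have fbx : code (f b) != code (f x) by apply: contra xNl => /eqP/code_inj/f_inj <-.
  rewrite !oddb; move: bx fbx.
  by case: (ltngtP (code b) (code x)); case: (ltngtP (code (f b)) (code (f x))).
by rewrite count_map flips_cons !oddD IHl // key addbACA.
Qed.

Lemma odd_flips_tperm (x y : T) (l : seq T) : uniq l -> x \in l -> y \in l -> x != y ->
  odd (flips (tperm x y) l).
Proof.
wlog lt_xy : x y / x <c y.
  move=> W ul xl yl xy; have cxy : code x != code y by apply: contra xy => /eqP/code_inj ->.
  case: ltngtP cxy => // [lt_xy|lt_yx] _; first exact: W.
  by rewrite tpermC; apply: W; rewrite // eq_sym.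
move=> ul xl yl xy; have yx : y != x by rewrite eq_sym.
pose h z := (x <c z) && (z <c y).
(* [tperm x y] reverses the pair (x, y) and, for each z with x < z < y, the
   pairs (x, z) and (z, y): an odd number of pairs. *)
have flip_tperm a b : (a <c b) && (tperm x y b <c tperm x y a)
    = ((b == y) && ((a == x) (+) h a)) (+) ((a == x) && h b).
  case: (tpermP x y a) => [->|->|/eqP/negPf-> _];
  case: (tpermP x y b) => [->|->|_ /eqP/negPf->];
  rewrite ?eqxx ?(negPf xy) ?(negPf yx) /h /=; lia.
rewrite /flips odd_sum (eq_bigr (fun a =>
    ((a == x) (+) h a) (+) ((a == x) && \big[addb/false]_(b <- l) h b))) => [|a _].
  by rewrite !big_split /= -odd_count count_uniq_mem // xl big_addb_eq_and // addbK.
rewrite odd_sum; under eq_bigr do rewrite oddb flip_tperm.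
rewrite big_split /= big_addb_eq_and //; congr addb.
by case: eqP => _ //; rewrite big1.
Qed.

Lemma odd_inversions_perm (q : {perm T}) (l : seq T) :
  uniq l -> perm_on [set z in l] q ->
  odd (inversions (map q l)) = odd (inversions l) (+) odd_perm q.
Proof.
move=> ul; apply: (perm_on_tperm_ind (P := fun q =>
  odd (inversions (map q l)) = odd (inversions l) (+) odd_perm q)) => {q} [|q x y qS].
  by rewrite odd_perm1 addbF map_id_in // => z _; rewrite perm1.
rewrite !inE => xl yl xy IHq.
have qlE : perm_eq (map q l) l.
  apply: uniq_perm; rewrite ?map_inj_uniq //; first exact: perm_inj.
  move=> z; rewrite -{1}(permKV q z) mem_map; last exact: perm_inj.
  by rewrite -[_ \in l]inE (perm_closed _ (perm_onV qS)) inE.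
have -> : map (q * tperm x y)%g l = map (tperm x y) (map q l).
  by rewrite -map_comp; apply: eq_map => z; rewrite permM.
rewrite (odd_inversions_map (@perm_inj _ _)) ?(perm_uniq qlE) //.
by rewrite IHq (flips_perm_eq _ qlE) odd_flips_tperm // odd_permM odd_tperm xy addbA.
Qed.

End ListInversions.

Section EdgeOrder.
Variable n : nat.

Lemma edge_codeP (e : edge n) : exists x y : 'I_n,
  [/\ (x < y)%N, val e = [set x; y] & edge_code e = (x * n + y)%N].
Proof.
have /cards2P [x [y [xy eE]]] := valP e.
wlog lt_xy : x y xy eE / (x < y)%N.
  move=> W; case: (ltngtP x y) => [|lt_yx|/val_inj eq_xy]; first exact: W.
    by apply: (W y x); rewrite // 1?eq_sym // setUC.
  by rewrite eq_xy eqxx in xy.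
exists x, y; split => //; rewrite /edge_code eE -minEnat -maxEnat.
rewrite bigminU bigmaxU !bigmin_set1 !bigmax_set1 minEnat maxEnat.
have := ltn_ord y; lia.
Qed.

Lemma edge_code_inj : injective (@edge_code n).
Proof.
move=> e f; have [x [y [lt_xy eE ->]]] := edge_codeP e.
have [x' [y' [lt_xy' fE ->]]] := edge_codeP f.
have n_gt0 : (0 < n)%N by apply: leq_ltn_trans (ltn_ord y).
move=> /(congr1 (fun k => (k %/ n, k %% n)))/=; rewrite !divnMDl // !modnMDl.
rewrite !divn_small ?modn_small // !addn0 => -[eq_x eq_y].
by apply: val_inj; rewrite eE fE (ord_inj eq_x) (ord_inj eq_y).
Qed.

End EdgeOrder.

Local Open Scope ring_scope.

Section ExteriorAlgebra.
Variable n : nat.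
Local Notation T := (edge n).
Local Notation inversions := (inversions (@edge_code n)).

Lemma ext_basisE (A C : {set T}) : ext_basis A C = (C == A)%:R.
Proof. by rewrite ffunE. Qed.

Lemma ext_scaleE c (x : ext n) C : ext_scale c x C = c * x C.
Proof. by rewrite ffunE. Qed.

Lemma ext_scale1 (x : ext n) : ext_scale 1 x = x.
Proof. by apply/ffunP => C; rewrite ffunE mul1r. Qed.

Lemma ext_scaleA a b (x : ext n) : ext_scale a (ext_scale b x) = ext_scale (a * b) x.
Proof. by apply/ffunP => C; rewrite !ffunE mulrA. Qed.

Lemma wedge_basis (A B : {set T}) : wedge (ext_basis A) (ext_basis B) =
  [ffun C => if (A :&: B == set0) && (A :|: B == C) then shuffle_sign A B else 0].
Proof.
apply/ffunP => C; rewrite !ffunE [LHS](bigD1 A) //= [X in _ + X]big1 => [|A' nA']; last first.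
  by apply: big1 => B' _; rewrite ext_basisE (negPf nA'); case: ifP; rewrite ?mulr0 ?mul0r.
rewrite addr0 [LHS](bigD1 B) //= [X in _ + X]big1 => [|B' nB']; last first.
  by rewrite !ext_basisE (negPf nB'); case: ifP; rewrite ?mulr0.
by rewrite addr0 !ext_basisE !eqxx !mulr1.
Qed.

Lemma wedge_scaler (x : ext n) k (y : ext n) :
  wedge x (ext_scale k y) = ext_scale k (wedge x y).
Proof.
apply/ffunP => C; rewrite !ffunE mulr_sumr; apply: eq_bigr => A _.
rewrite mulr_sumr; apply: eq_bigr => B _; rewrite ffunE.
by case: ifP => _; rewrite ?mulr0 // mulrCA mulrA.
Qed.

Lemma omega_wedge_basis (x : T) (B : {set T}) : x \notin B ->
  wedge (omega x) (ext_basis B) =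
  ext_scale ((-1) ^+ #|[set b in B | edge_lt b x]|) (ext_basis (x |: B)).
Proof.
move=> xNB; rewrite /omega wedge_basis; apply/ffunP => C; rewrite !ffunE.
have -> : [set x] :&: B == set0.
  by apply/eqP/setP => z; rewrite !inE; case: eqP => // ->; rewrite (negPf xNB).
rewrite /= eq_sym; case: eqP => _; rewrite ?mulr0 // mulr1 /shuffle_sign.
have -> : [set p in setX [set x] B | edge_lt p.2 p.1] = setX [set x] [set b in B | edge_lt b x].
  by apply/setP => -[a b]; rewrite !inE /=; case: eqP => [->|].
by rewrite cardsX cards1 mul1n.
Qed.

Lemma wedge_omega_seq (l : seq T) : uniq l ->
  foldr (@wedge n) (ext_one n) (map (@omega n) l) =
  ext_scale ((-1) ^+ inversions l) (ext_basis [set z in l]).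
Proof.
elim: l => [_|x l IHl] /=.
  by rewrite ext_scale1 /ext_one; congr ext_basis; apply/setP => z; rewrite !inE.
case/andP => xNl ul; rewrite IHl // wedge_scaler omega_wedge_basis ?inE //.
have -> : #|[set b in [set z in l] | edge_lt b x]| = count (fun b => edge_lt b x) l.
  rewrite -size_filter -(card_uniqP (filter_uniq _ ul)).
  by apply: eq_card => b; rewrite !inE mem_filter andbC.
by rewrite ext_scaleA -exprD addnC set_cons.
Qed.

Lemma sorted_edges_uniq (A : {set T}) : uniq (sorted_edges A).
Proof. by rewrite sort_uniq enum_uniq. Qed.

Lemma mem_sorted_edges (A : {set T}) : sorted_edges A =i A.
Proof. by move=> z; rewrite mem_sort mem_enum. Qed.

Lemma set_sorted_edges (A : {set T}) : [set z in sorted_edges A] = A.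
Proof. by apply/setP => z; rewrite inE mem_sorted_edges. Qed.

Lemma inversions_sorted_edges (A : {set T}) : inversions (sorted_edges A) = 0%N.
Proof. by apply: inversions_sorted; apply: sort_sorted => a b; apply: leq_total. Qed.

Lemma mu_basis (D : {set T}) : mu D = ext_basis D.
Proof.
rewrite /mu wedge_omega_seq ?sorted_edges_uniq //.
by rewrite inversions_sorted_edges expr0 ext_scale1 set_sorted_edges.
Qed.

Definition act_sign (s : 'S_n) (A : {set T}) : rat :=
  (-1) ^+ odd (inversions (map (edge_perm s) (sorted_edges A))).

Lemma map_sorted_edges_perm (s : 'S_n) (A : {set T}) :
  perm_eq (map (edge_perm s) (sorted_edges A)) (sorted_edges (edge_perm s @: A)).
Proof.
apply: uniq_perm; rewrite ?sorted_edges_uniq ?map_inj_uniq ?sorted_edges_uniq //.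
  exact: perm_inj.
move=> z; rewrite mem_sorted_edges; apply/mapP/imsetP => -[y yA ->]; exists y => //.
  by rewrite -mem_sorted_edges.
by rewrite mem_sorted_edges.
Qed.

Lemma ext_act_monomial (s : 'S_n) (A : {set T}) :
  foldr (@wedge n) (ext_one n) (map (fun e => omega (edge_perm s e)) (sorted_edges A)) =
  ext_scale (act_sign s A) (ext_basis (edge_perm s @: A)).
Proof.
rewrite (map_comp (@omega n) (edge_perm s)) wedge_omega_seq /act_sign ?signr_odd; last first.
  by rewrite map_inj_uniq ?sorted_edges_uniq //; apply: perm_inj.
congr (ext_scale _ (ext_basis _)); apply/setP => z.
by rewrite inE (perm_mem (map_sorted_edges_perm s A)) mem_sorted_edges.
Qed.

Lemma ext_act_basis (s : 'S_n) (A : {set T}) :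
  ext_act s (ext_basis A) = ext_scale (act_sign s A) (ext_basis (edge_perm s @: A)).
Proof.
rewrite /ext_act (bigD1 A) //= big1 => [|B nB]; last first.
  by rewrite ext_basisE (negPf nB); apply/ffunP => C; rewrite !ffunE mul0r.
by rewrite addr0 ext_basisE eqxx ext_scale1 ext_act_monomial.
Qed.

Lemma ext_act_coef (s : 'S_n) (x : ext n) (A : {set T}) :
  ext_act s x (edge_perm s @: A) = act_sign s A * x A.
Proof.
rewrite /ext_act sum_ffunE (bigD1 A) //= big1 => [|B nB]; last first.
  rewrite ext_act_monomial !ext_scaleE ext_basisE.
  rewrite (inj_eq (imset_inj (@perm_inj _ _))) eq_sym (negPf nB).
  by rewrite !mulr0.
by rewrite addr0 ext_act_monomial !ext_scaleE ext_basisE eqxx mulr1 mulrC.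
Qed.

End ExteriorAlgebra.

Section Alpha.
Variable n : nat.
Local Notation T := (edge n).

Lemma edge_permM (s t : 'S_n) : edge_perm (s * t)%g = (edge_perm s * edge_perm t)%g.
Proof.
apply/permP => e; apply: val_inj; rewrite permM !permE /= -imset_comp.
by apply: eq_imset => i /=; rewrite permM.
Qed.

Lemma edge_perm1 : edge_perm (1%g : 'S_n) = 1%g.
Proof.
apply/permP => e; apply: val_inj; rewrite !permE /= -[RHS]imset_id.
by apply: eq_imset => i; rewrite perm1.
Qed.

Lemma graph_iso_trans (D1 D2 D3 : {set T}) :
  graph_iso D1 D2 -> graph_iso D2 D3 -> graph_iso D1 D3.
Proof. by move=> [s <-] [t <-]; exists (s * t)%g; rewrite edge_permM imset_permM. Qed.

Lemma act_signM (s t : 'S_n) (A : {set T}) :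
  act_sign (s * t)%g A = act_sign t (edge_perm s @: A) * act_sign s A.
Proof.
have map_st : map (edge_perm (s * t)%g) (sorted_edges A)
    = map (edge_perm t) (map (edge_perm s) (sorted_edges A)).
  by rewrite -map_comp; apply: eq_map => e; rewrite edge_permM permM.
have uniq_sA : uniq (map (edge_perm s) (sorted_edges A)).
  by rewrite map_inj_uniq ?sorted_edges_uniq //; apply: perm_inj.
rewrite /act_sign map_st.
rewrite !(odd_inversions_map (@edge_code_inj n) (@perm_inj _ _)) ?sorted_edges_uniq //.
rewrite !inversions_sorted_edges (flips_perm_eq _ _ (map_sorted_edges_perm s A)).
by rewrite -signr_addb addbC.
Qed.

Lemma act_sign_stab (s : 'S_n) (A : {set T}) : edge_perm s @: A = A ->
  act_sign s A = (-1) ^+ odd_perm (restr_perm A (edge_perm s)).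
Proof.
move=> sA; have sN : edge_perm s \in 'N(A | 'P)%g.
  by apply/astabsP => e /=; rewrite apermE -{1}sA mem_imset //; apply: perm_inj.
rewrite /act_sign; have -> : map (edge_perm s) (sorted_edges A)
    = map (restr_perm A (edge_perm s)) (sorted_edges A).
  by apply/eq_in_map => e; rewrite mem_sorted_edges => eA; rewrite restr_permE.
rewrite (odd_inversions_perm (@edge_code_inj n)) ?sorted_edges_uniq //.
  by rewrite inversions_sorted_edges.
by rewrite set_sorted_edges restr_perm_on.
Qed.

Lemma stab1 (D : {set T}) : (1%g : 'S_n) \in stab D.
Proof. by rewrite inE edge_perm1 (eq_imset _ (@perm1 _)) imset_id. Qed.

Lemma alpha_coef (D C : {set T}) : alpha D C =
  (#|stab D|%:R)^-1 * \sum_(s : 'S_n) act_sign s D * (C == edge_perm s @: D)%:R.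
Proof.
rewrite /alpha ext_scaleE sum_ffunE; congr (_ * _); apply: eq_bigr => s _.
by rewrite mu_basis ext_act_basis ext_scaleE ext_basisE.
Qed.

Lemma alpha_invariant (D : {set T}) : ext_invariant (alpha D).
Proof.
move=> t; apply/ffunP => C.
have -> : C = edge_perm t @: ((edge_perm t)^-1 @: C)%g.
  by rewrite -imset_permM mulVg (eq_imset _ (@perm1 _)) imset_id.
set A := ((edge_perm t)^-1 @: C)%g.
rewrite ext_act_coef !alpha_coef mulrCA mulr_sumr; congr (_ * _).
rewrite [RHS](reindex_inj (mulIg t)); apply: eq_bigr => s _.
rewrite act_signM edge_permM imset_permM (inj_eq (imset_inj (@perm_inj _ _))).
by case: eqP => [<-|_]; rewrite ?mulr0 // !mulr1 mulrC.
Qed.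

Lemma alpha_self (D : {set T}) : invariant_graph D -> alpha D D = 1.
Proof.
move=> Dinv; rewrite alpha_coef.
rewrite (eq_bigr (fun s => if s \in stab D then 1 else 0)) => [|s _]; last first.
  rewrite inE eq_sym; case: eqP => [sD|_]; last by rewrite mulr0.
  by rewrite act_sign_stab // (negPf (Dinv s _)) ?inE ?sD // mulr1.
rewrite -big_mkcond sumr_const mulVf // pnatr_eq0 -lt0n.
by apply/card_gt0P; exists 1%g; apply: stab1.
Qed.

Lemma alpha_eq0 (D C : {set T}) : ~ graph_iso D C -> alpha D C = 0.
Proof.
move=> DNC; rewrite alpha_coef big1 ?mulr0 // => s _.
by case: eqP => [C_sD|]; rewrite ?mulr0 //; case: DNC; exists s.
Qed.

Lemma invariant_coef (x : ext n) (s : 'S_n) (A : {set T}) :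
  ext_invariant x -> x (edge_perm s @: A) = act_sign s A * x A.
Proof. by move=> xinv; rewrite -{1}(xinv s) ext_act_coef. Qed.

Lemma invariant_coef_odd (x : ext n) (s : 'S_n) (C : {set T}) : ext_invariant x ->
  s \in stab C -> odd_perm (restr_perm C (edge_perm s)) -> x C = 0.
Proof.
rewrite inE => xinv /eqP sC odd_s; have := invariant_coef s C xinv.
rewrite sC act_sign_stab // odd_s expr1 mulN1r => /eqP.
by rewrite -addr_eq0 -mulr2n mulrn_eq0 => /eqP.
Qed.

Lemma invariant_graphP (D : {set T}) : reflect (invariant_graph D)
  [forall s in stab D, ~~ odd_perm (restr_perm D (edge_perm s))].
Proof. by apply: (iffP forall_inP). Qed.

End Alpha.

Section Representatives.
Variables (n : nat) (reps : seq {set edge n}).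
Hypothesis reps_uniq : uniq reps.
Hypothesis reps_invariant : forall D, D \in reps -> invariant_graph D.
Hypothesis reps_noniso : forall D1 D2, D1 \in reps -> D2 \in reps -> graph_iso D1 D2 -> D1 = D2.
Local Notation rep i := (tnth (in_tuple reps) i).

Lemma rep_iso_inj (i j : 'I_(size reps)) : graph_iso (rep i) (rep j) -> i = j.
Proof.
move/reps_noniso => eq_ij; apply/(tuple_uniqP (in_tuple reps) reps_uniq)/eq_ij; exact: mem_tnth.
Qed.

Lemma alpha_rep_coef (i j : 'I_(size reps)) : alpha (rep i) (rep j) = (i == j)%:R.
Proof.
have [<-|ij] := eqVneq i j; first by rewrite alpha_self //; apply/reps_invariant/mem_tnth.
by apply: alpha_eq0 => /rep_iso_inj eq_ij; rewrite eq_ij eqxx in ij.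
Qed.

Lemma alpha_reps_free (c : 'I_(size reps) -> rat) :
  \sum_(i < size reps) ext_scale (c i) (alpha (rep i)) = 0 -> forall i, c i = 0.
Proof.
move=> c_rel j; have := congr1 (fun x : ext n => x (rep j)) c_rel.
rewrite /= sum_ffunE ffunE (bigD1 j) //= big1 => [|i ij]; last first.
  by rewrite ext_scaleE alpha_rep_coef (negPf ij) mulr0.
by rewrite ext_scaleE alpha_rep_coef eqxx mulr1 addr0.
Qed.

Hypothesis reps_cover :
  forall D, invariant_graph D -> exists2 D', D' \in reps & graph_iso D D'.

Lemma alpha_reps_span (x : ext n) : ext_invariant x ->
  x = \sum_(i < size reps) ext_scale (x (rep i)) (alpha (rep i)).
Proof.
move=> xinv; apply/ffunP => C; rewrite sum_ffunE.
have [Cinv|/invariant_graphP/forall_inPn [s sC /negbNE odd_s]] := invariant_graphP C;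
  last first.
  rewrite (invariant_coef_odd xinv sC odd_s) big1 // => i _.
  by rewrite ext_scaleE (invariant_coef_odd (alpha_invariant _) sC odd_s) mulr0.
have [D' D'_rep [u uC]] := reps_cover Cinv.
have /(nthP C) [k k_lt D'E] := D'_rep.
pose K := Ordinal k_lt; have repK : rep K = D' by rewrite (tnth_nth C).
rewrite -{}repK {D'E D'_rep} in uC.
rewrite (bigD1 K) //= big1 => [|i iK]; last first.
  rewrite ext_scaleE alpha_eq0 ?mulr0 // => iC; move/negP: iK; apply; apply/eqP.
  by apply: rep_iso_inj; apply: graph_iso_trans iC _; exists u.
have := invariant_coef u C (alpha_invariant (rep K)).
rewrite uC alpha_self; last exact/reps_invariant/mem_tnth.
move=> alpha_sign; rewrite addr0 ext_scaleE -{1}uC (invariant_coef _ _ xinv).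
by rewrite mulrAC -alpha_sign mul1r.
Qed.

End Representatives.

Theorem theorem2p8 (n : nat) (hn : (1 <= n)%N) (reps : seq {set edge n}) :
  (* reps is a choice of representatives Delta_D, one for each D in D_n *)
  uniq reps ->
  (forall D, D \in reps -> invariant_graph D) ->
  (forall D1 D2, D1 \in reps -> D2 \in reps -> graph_iso D1 D2 -> D1 = D2) ->
  (forall D, invariant_graph D -> exists2 D', D' \in reps & graph_iso D D') ->
  (* the alpha_D form a Q-basis of the S_n-invariants *)
  [/\ forall D, D \in reps -> ext_invariant (alpha D),
      forall c : 'I_(size reps) -> rat,
        \sum_(i < size reps) ext_scale (c i) (alpha (tnth (in_tuple reps) i)) = 0 ->
        forall i, c i = 0
    & forall x : ext n, ext_invariant x ->
        exists c : 'I_(size reps) -> rat,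
          x = \sum_(i < size reps) ext_scale (c i) (alpha (tnth (in_tuple reps) i))].
Proof.
move=> reps_uniq reps_invariant reps_noniso reps_cover; split.
- by move=> D _; apply: alpha_invariant.
- exact: alpha_reps_free.
- by move=> x xinv; exists (fun i => x (tnth (in_tuple reps) i)); apply: alpha_reps_span.
Qed.
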